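(* Let $(\varepsilon^-_n)$, $(\varepsilon^+_n)$ be sequences with $\varepsilon^-_n\le\varepsilon^+_n$, $n^{1/3}\varepsilon^-_n\to\infty$ and $\varepsilon^+_n\to0$; let $\varepsilon_n\in[\varepsilon^-_n,\varepsilon^+_n]$, $\gamma\in[-1,1]$ and $p_n=\frac1n(1+\gamma\varepsilon_n)$. Define the process $(S_k)_{k\ge0}$ by $S_0=0$ and $S_k=S_{k-1}+X_k-1$ for $k\ge1$, where conditionally on $X_1,\dots,X_{k-1}$, $X_k$ has the Binomial$(n-k-S_{k-1},p_n)$ distribution. Then for every $\eta>0$ there is $\kappa>0$, depending only on $\eta$ and $(\varepsilon^\pm_n)$, such that \[ \mathbb{P}\left(\sup_{0\le k\le 3n\varepsilon_n}\frac{1}{n\varepsilon_n^2}\left|S_k-k\left(\gamma\varepsilon_n-\frac{k}{2n}\right)\right|>\eta\right)\le\exp(-\kappa n\varepsilon_n^3), \] the supremum being over integers $k$. *)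

From HB Require Import structures.
From mathcomp Require Import all_boot all_order all_algebra.
From mathcomp Require Import all_classical all_reals all_analysis.
Set Implicit Arguments. Unset Strict Implicit. Unset Printing Implicit Defensive.
Import Order.TTheory GRing.Theory Num.Theory.
Local Open Scope ring_scope.

Definition binom_pmf (R : realType) (N : nat) (p : R) (x : nat) : R :=
  ('C(N, x))%:R * p ^+ x * (1 - p) ^+ (N - x).

(* A realisation of (X_1, ..., X_K) is x : {ffun 'I_K -> 'I_n.+1}
   (x i is X_{i+1}; note X_k <= n - k - S_{k-1} <= n always).
   S_k = X_1 + ... + X_k - k, for 0 <= k <= K. *)
Definition Spath (n K : nat) (x : {ffun 'I_K -> 'I_n.+1}) (k : nat) : int :=
  (\sum_(i < K | (i < k)%N) ((x i : nat)%:Z)) - k%:Z.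

(* The number n - k - S_{k-1} is always >= 0
   on the support (S_{k-1} <= n - k), so taking its absolute value is harmless. *)
Definition path_prob (R : realType) (n K : nat) (p : R)
    (x : {ffun 'I_K -> 'I_n.+1}) : R :=
  \prod_(i < K) binom_pmf (absz (n%:Z - (i.+1)%:Z - Spath x i)%R) p (x i).

Definition dev_event (R : realType) (n K : nat) (gamma eps eta : R)
    (x : {ffun 'I_K -> 'I_n.+1}) : bool :=
  [exists k : 'I_K.+1,
     (n%:R * eps ^+ 2)^-1 *
       `| (Spath x k)%:~R - (k : nat)%:R * (gamma * eps - (k : nat)%:R / (2 * n%:R)) |
     > eta].

Definition nsteps (R : realType) (n : nat) (eps : R) : nat :=
  Num.truncn (3 * n%:R * eps).

Definition dev_prob (R : realType) (n : nat) (gamma eps eta : R) : R :=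
  let K := nsteps n eps in
  let p := (1 + gamma * eps) / n%:R in
  \sum_(x : {ffun 'I_K -> 'I_n.+1} | dev_event gamma eps eta x) path_prob p x.

From HB Require Import structures.
From mathcomp Require Import all_boot all_order all_algebra.
From mathcomp Require Import all_classical all_reals all_analysis.
From mathcomp Require Import ring lra.
Import Order.TTheory GRing.Theory Num.Theory.
Set Implicit Arguments. Unset Strict Implicit. Unset Printing Implicit Defensive.
Local Open Scope ring_scope.

(* The martingale part M_k = sum_{l<k} (X_{l+1} - N_l p) of the walk, where
   N_l = n - (l+1) - S_l is the number of trials of X_{l+1}, has conditionally
   centred Binomial(N_l, p) increments with N_l p <= 2.  The binomial moment
   generating function makes exp(t M_k - 4 t^2 k) a supermartingale for
   t <= 1/2; stopping it when it first exceeds e^L and applying Markov's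
   inequality bounds the probability that one of +-M_k, k <= K, reaches b/2
   by e^-L.  With b = eta n eps^2 and t = eta eps / 48 this is at most
   exp(-eta^2 n eps^3 / 192).  Outside that event the identity
     S_k - k (gamma eps - k/2n)
       = M_k - k^2 gamma eps / 2n - p k / 2 - p sum_{l<k} S_l
   propagates |M_k| < b/2, by induction on k, to
   |S_k - k (gamma eps - k/2n)| <= b for all k <= 3 n eps. *)

(* Paths of every length are read as sequences padded with 0, so that causal
   functionals of the history all live on [nat -> nat]. *)
Definition path_seq (n m : nat) (x : {ffun 'I_m -> 'I_n.+1}) (l : nat) : nat :=
  oapp (fun i : 'I_m => (x i : nat)) 0%N (insub l).

Lemma path_seq_ord n m (x : {ffun 'I_m -> 'I_n.+1}) (i : 'I_m) : path_seq x i = x i.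
Proof. by rewrite /path_seq valK. Qed.

Definition extend (n m : nat) (y : {ffun 'I_m -> 'I_n.+1}) (v : 'I_n.+1) :
  {ffun 'I_m.+1 -> 'I_n.+1} :=
  [ffun i : 'I_m.+1 => oapp (fun j : 'I_m => y j) v (insub (val i))].

Lemma extend_widen n m (y : {ffun 'I_m -> 'I_n.+1}) v (i : 'I_m) :
  extend y v (widen_ord (leqnSn m) i) = y i.
Proof. by rewrite ffunE /= valK. Qed.

Lemma extend_last n m (y : {ffun 'I_m -> 'I_n.+1}) v : extend y v ord_max = v.
Proof. by rewrite ffunE /= insubF // ltnn. Qed.

Lemma path_seq_extend_lt n m (y : {ffun 'I_m -> 'I_n.+1}) v l :
  (l < m)%N -> path_seq (extend y v) l = path_seq y l.
Proof.
move=> lm; rewrite /path_seq (insubT (fun k => k < m.+1)%N (ltnW lm)).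
by rewrite (insubT (fun k => k < m)%N lm) /= ffunE /= (insubT (fun k => k < m)%N lm).
Qed.

Lemma path_seq_extend_last n m (y : {ffun 'I_m -> 'I_n.+1}) v :
  path_seq (extend y v) m = v.
Proof.
by rewrite /path_seq (insubT (fun k => k < m.+1)%N (ltnSn m)) /= ffunE /= insubF // ltnn.
Qed.

Lemma sum_ffunS (R : nmodType) n m (F : {ffun 'I_m.+1 -> 'I_n.+1} -> R) :
  \sum_x F x = \sum_(y : {ffun 'I_m -> 'I_n.+1}) \sum_(v : 'I_n.+1) F (extend y v).
Proof.
rewrite pair_big /= (reindex (fun yv => extend yv.1 yv.2)) //=.
pose restr (x : {ffun 'I_m.+1 -> 'I_n.+1}) :=
  ([ffun i : 'I_m => x (widen_ord (leqnSn m) i)], x ord_max).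
apply: onW_bij; exists restr => [[y v]|x]; rewrite /restr /=.
  by rewrite extend_last; congr (_, _); apply/ffunP => i; rewrite ffunE extend_widen.
apply/ffunP => i; rewrite ffunE; case: (ltnP i m) => him.
  by rewrite (insubT (fun k => k < m)%N him) /= ffunE; congr (x _); apply: val_inj.
rewrite insubF ?ltnNge ?him //=; congr (x _); apply: val_inj => /=.
by apply/eqP; rewrite eqn_leq him -ltnS ltn_ord.
Qed.

Definition agree (f g : nat -> nat) (k : nat) := forall l, (l < k)%N -> f l = g l.

Definition causal (T : Type) (F : (nat -> nat) -> nat -> T) :=
  forall f g k, agree f g k -> F f k = F g k.

Definition fupd (f : nat -> nat) (m v : nat) : nat -> nat :=
  fun l => if l == m then v else f l.

Lemma agree_le f g k k' : (k' <= k)%N -> agree f g k -> agree f g k'.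
Proof. by move=> h a l hl; apply: a; apply: leq_trans h. Qed.

Lemma agree_fupd f m v : agree (fupd f m v) f m.
Proof. by move=> l hl; rewrite /fupd ifN // ltn_eqF. Qed.

Lemma agree_extend n m (y : {ffun 'I_m -> 'I_n.+1}) v :
  agree (path_seq (extend y v)) (fupd (path_seq y) m v) m.+1.
Proof.
move=> l; rewrite ltnS leq_eqVlt /fupd => /orP[/eqP->|lm].
  by rewrite eqxx path_seq_extend_last.
by rewrite ltn_eqF // path_seq_extend_lt.
Qed.

Section PathMeasure.
Variables (R : numFieldType) (n : nat) (q : (nat -> nat) -> nat -> nat -> R).
Hypotheses (q_causal : causal q) (q_ge0 : forall f j v, 0 <= q f j v).

Definition path_weight m (y : {ffun 'I_m -> 'I_n.+1}) : R :=
  \prod_(i < m) q (path_seq y) i (y i).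

Definition expect m (Z : (nat -> nat) -> R) : R :=
  \sum_(y : {ffun 'I_m -> 'I_n.+1}) path_weight y * Z (path_seq y).

Lemma path_weight_ge0 m (y : {ffun 'I_m -> 'I_n.+1}) : 0 <= path_weight y.
Proof. by apply: prodr_ge0 => i _; apply: q_ge0. Qed.

Lemma path_weight_extend m (y : {ffun 'I_m -> 'I_n.+1}) v :
  path_weight (extend y v) = path_weight y * q (path_seq y) m v.
Proof.
have a : agree (path_seq (extend y v)) (path_seq y) m.
  by move=> l lm; apply: path_seq_extend_lt.
rewrite /path_weight big_ord_recr /= extend_last (q_causal a); congr (_ * _).
apply: eq_bigr => i _; rewrite extend_widen (q_causal (agree_le _ a)) //.
exact: ltnW.
Qed.

Lemma expect0 Z : expect 0 Z = Z (fun=> 0%N).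
Proof.
rewrite /expect (eq_bigr (fun=> Z (fun=> 0%N))); last first.
  move=> y _; rewrite /path_weight big_ord0 mul1r; congr Z.
  by apply/funext => l; rewrite /path_seq insubF.
by rewrite sumr_const card_ffun !card_ord expn0.
Qed.

Variable Z : (nat -> nat) -> nat -> R.
Hypothesis Z_causal : causal Z.

Lemma expect_supermartingale m :
  (forall f j, \sum_(v < n.+1) q f j v * Z (fupd f j v) j.+1 <= Z f j) ->
  expect m (Z^~ m) <= Z (fun=> 0%N) 0.
Proof.
move=> Z_step; elim: m => [|m IH]; first by rewrite expect0.
apply: le_trans IH; rewrite /expect sum_ffunS; apply: ler_sum => y _.
under eq_bigr => v _ do rewrite path_weight_extend (Z_causal (agree_extend y v)) -mulrA.
by rewrite -mulr_sumr ler_wpM2l ?path_weight_ge0.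
Qed.

Lemma markov_paths m (A : pred {ffun 'I_m -> 'I_n.+1}) c : 0 < c ->
  (forall f, 0 <= Z f m) ->
  (forall y, A y -> path_weight y != 0 -> c <= Z (path_seq y) m) ->
  \sum_(y | A y) path_weight y <= expect m (Z^~ m) / c.
Proof.
move=> c0 Z0 hA; rewrite ler_pdivlMr // mulr_suml /expect.
apply: le_trans (_ : \sum_(y | A y) path_weight y * Z (path_seq y) m <= _).
  apply: ler_sum => y Ay; have [->|w0] := eqVneq (path_weight y) 0; first by rewrite !mul0r.
  by rewrite ler_wpM2l ?path_weight_ge0 ?hA.
rewrite [leRHS](bigID A) /= lerDl; apply: sumr_ge0 => y _.
by rewrite mulr_ge0 ?path_weight_ge0.
Qed.

End PathMeasure.

Lemma sumr_ord_le_vanishing (R : numDomainType) (g : nat -> R) (m N : nat) :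
  (forall v, 0 <= g v) -> (forall v, (N < v)%N -> g v = 0) ->
  \sum_(v < m) g v <= \sum_(v < N.+1) g v.
Proof.
move=> g0 gN; rewrite -!(big_mkord xpredT).
case: (leqP m N.+1) => hm.
  by rewrite (@big_cat_nat _ _ _ m 0 N.+1 _ _ (leq0n m) hm) /= lerDl sumr_ge0.
rewrite (@big_cat_nat _ _ _ N.+1 0 m _ _ (leq0n _) (ltnW hm)) /= gerDl big_nat_cond big1 //.
by move=> i /andP[/andP[hi _] _]; apply: gN.
Qed.

Lemma binom_pmf_ge0 (R : realType) N (p : R) v : 0 <= p <= 1 -> 0 <= binom_pmf N p v.
Proof.
by case/andP=> p0 p1; rewrite /binom_pmf !mulr_ge0 ?exprn_ge0 ?subr_ge0.
Qed.

Lemma binom_pmf_small (R : realType) N (p : R) v : (N < v)%N -> binom_pmf N p v = 0.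
Proof. by move=> h; rewrite /binom_pmf bin_small // !mul0r. Qed.

Lemma binom_mgf (R : realType) N (p c : R) :
  \sum_(v < N.+1) binom_pmf N p v * c ^+ v = (1 - p + p * c) ^+ N.
Proof.
by rewrite exprDn; apply: eq_bigr => i _; rewrite /binom_pmf exprMn -mulr_natr; ring.
Qed.

Lemma binom_pmf_sum_le1 (R : realType) N (p : R) m : 0 <= p <= 1 ->
  \sum_(v < m) binom_pmf N p v <= 1.
Proof.
move=> hp; apply: le_trans (sumr_ord_le_vanishing m (N:=N) _ _) _.
- by move=> v; apply: binom_pmf_ge0.
- by move=> v; apply: binom_pmf_small.
have := binom_mgf N p 1; rewrite mulr1 subrK expr1n => <-.
by under [leRHS]eq_bigr do rewrite expr1n mulr1.
Qed.

Lemma expR_le_quad (R : realType) (t : R) : t <= 2^-1 -> expR t <= 1 + t + 2 * t ^+ 2.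
Proof.
move=> ht.
have h1 : 1 - t <= expR (- t) by have := expR_ge1Dx (- t); lra.
rewrite -(ler_pM2r (_ : 0 < 1 - t)); last by lra.
apply: le_trans (_ : expR t * expR (- t) <= _); first by rewrite ler_wpM2l ?expR_ge0.
rewrite expRxMexpNx_1.
have : 0 <= t ^+ 2 * (1 - 2 * t) by rewrite mulr_ge0 ?sqr_ge0 //; lra.
rewrite expr2; nra.
Qed.

Lemma binom_mgf_le (R : realType) (N : nat) (p t : R) :
  0 <= p <= 1 -> N%:R * p <= 2 -> t <= 2^-1 ->
  (1 - p + p * expR t) ^+ N <= expR (t * (N%:R * p) + 4 * t ^+ 2).
Proof.
move=> /andP[p0 p1] hN ht.
have hb : 1 - p + p * expR t <= expR (p * (t + 2 * t ^+ 2)).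
  apply: le_trans (expR_ge1Dx _).
  have : p * expR t <= p * (1 + t + 2 * t ^+ 2) by rewrite ler_wpM2l ?expR_le_quad.
  lra.
have hb0 : 0 <= 1 - p + p * expR t.
  have : 0 <= p * expR t by rewrite mulr_ge0 ?expR_ge0.
  lra.
apply: le_trans (_ : expR (p * (t + 2 * t ^+ 2)) ^+ N <= _).
  by rewrite lerXn2r ?nnegrE ?expR_ge0.
rewrite -expRM_natl ler_expR.
have : (N%:R * p) * t ^+ 2 <= 2 * t ^+ 2 by rewrite ler_wpM2r ?sqr_ge0.
have -> : N%:R * (p * (t + 2 * t ^+ 2)) = t * (N%:R * p) + 2 * ((N%:R * p) * t ^+ 2).
  by ring.
lra.
Qed.

Definition walk (f : nat -> nat) (k : nat) : int := \sum_(l < k) (f l)%:Z - k%:Z.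

Definition ntrials (n : nat) (f : nat -> nat) (j : nat) : int :=
  n%:Z - (j.+1)%:Z - walk f j.

Definition step_pmf (R : realType) (n : nat) (p : R) (f : nat -> nat) (j : nat) : nat -> R :=
  binom_pmf (absz (ntrials n f j)) p.

Lemma Spath_walk n K (x : {ffun 'I_K -> 'I_n.+1}) k : (k <= K)%N ->
  Spath x k = walk (path_seq x) k.
Proof.
move=> kK; rewrite /Spath /walk (big_ord_widen_cond _ xpredT (fun l => (path_seq x l)%:Z) kK).
by congr (_ - _); apply: eq_bigr => i _; rewrite path_seq_ord.
Qed.

Lemma path_prob_weight (R : realType) n K (p : R) (x : {ffun 'I_K -> 'I_n.+1}) :
  path_prob p x = path_weight (step_pmf n p) x.
Proof.
by apply: eq_bigr => i _; rewrite /step_pmf /ntrials Spath_walk // ltnW.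
Qed.

Lemma walk_causal : causal walk.
Proof. by move=> f g k a; rewrite /walk; congr (_ - _); apply: eq_bigr => l _; rewrite a. Qed.

Lemma ntrials_causal n : causal (ntrials n).
Proof. by move=> f g k a; rewrite /ntrials (walk_causal a). Qed.

Lemma step_pmf_causal (R : realType) n (p : R) : causal (step_pmf n p).
Proof. by move=> f g k a; rewrite /step_pmf (ntrials_causal n a). Qed.

Lemma walkS f k : walk f k.+1 = walk f k + (f k)%:Z - 1.
Proof. by rewrite /walk big_ord_recr /= -addn1 PoszD; ring. Qed.

Lemma ntrialsS n f j : ntrials n f j.+1 = ntrials n f j - (f j)%:Z.
Proof. by rewrite /ntrials walkS -[j.+2]addn1 PoszD; ring. Qed.

Lemma walkSr (R : realType) f k :
  (walk f k.+1)%:~R = (walk f k)%:~R + (f k)%:R - 1 :> R.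
Proof. by rewrite walkS intrB intrD -pmulrn. Qed.

Lemma ntrialsE (R : realType) n f j :
  (ntrials n f j)%:~R = n%:R - j.+1%:R - (walk f j)%:~R :> R.
Proof. by rewrite [ntrials _ _ _]/ntrials !intrB -!pmulrn. Qed.

Lemma ntrials_le n f j : ntrials n f j <= n%:Z - 1.
Proof.
have : - j%:Z <= walk f j by rewrite /walk addrC lerDl sumr_ge0.
by rewrite /ntrials -addn1 PoszD; lra.
Qed.

Definition feasible (n : nat) (f : nat -> nat) (j : nat) :=
  forall l, (l < j)%N -> (f l)%:Z <= ntrials n f l.

Lemma ntrials_ge0 n f j : (0 < n)%N -> feasible n f j -> 0 <= ntrials n f j.
Proof.
move=> n0; case: j => [|j] hv; last by rewrite ntrialsS subr_ge0 hv.
by rewrite /ntrials /walk big_ord0 sub0r subr0 subr_ge0 lez_nat.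
Qed.

Lemma feasibleS (R : realType) n (p : R) f j : (0 < n)%N -> feasible n f j ->
  step_pmf n p f j (f j) != 0 -> feasible n f j.+1.
Proof.
move=> n0 hv hpmf l; rewrite ltnS leq_eqVlt => /orP[/eqP->|]; last exact: hv.
rewrite -(gez0_abs (ntrials_ge0 n0 hv)) lez_nat leqNgt.
by apply: contra hpmf => hlt; rewrite /step_pmf binom_pmf_small.
Qed.

Lemma feasible_of_weight (R : realType) n K (p : R) (x : {ffun 'I_K -> 'I_n.+1}) :
  (0 < n)%N -> path_weight (step_pmf n p) x != 0 -> feasible n (path_seq x) K.
Proof.
move=> n0 hw; suff : forall j, (j <= K)%N -> feasible n (path_seq x) j by apply.
elim=> [//|j IH] hj; apply: (feasibleS (p:=p) n0 (IH (ltnW hj))).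
rewrite -[j]/(nat_of_ord (Ordinal hj)) path_seq_ord.
by apply: contraNneq hw => h; rewrite /path_weight (bigD1 (Ordinal hj)) //= h mul0r.
Qed.

Section TiltedSupermartingale.
Variables (R : realType) (n : nat) (p : R).
Local Notation N f j := ((ntrials n f j)%:~R : R).

Definition mart (f : nat -> nat) (k : nat) : R := \sum_(l < k) ((f l)%:R - N f l * p).

Definition tilted (th : R) (f : nat -> nat) (k : nat) : R :=
  th * mart f k - 4 * th ^+ 2 * k%:R.

Definition reached (th L : R) (f : nat -> nat) (j : nat) : bool :=
  [exists l : 'I_j.+1, L <= tilted th f l].

(* The indicator discards histories off the support, where [ntrials] may be
   negative: [step_pmf] is then a binomial law of size |ntrials| and
   [expR (tilted th f j)] is no longer a supermartingale there. *)
Fixpoint stopped_exp (th L : R) (f : nat -> nat) (j : nat) : R :=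
  if j is j'.+1 then
    if reached th L f j' then stopped_exp th L f j'
    else stopped_exp th L f j' * (if (f j')%:Z <= ntrials n f j' then 1 else 0)
         * expR (tilted th f j'.+1 - tilted th f j')
  else 1.

Lemma mart_causal : causal mart.
Proof.
move=> f g k a; apply: eq_bigr => l _.
by rewrite a // (ntrials_causal n (agree_le (ltnW (ltn_ord l)) a)).
Qed.

Lemma tilted_causal th : causal (tilted th).
Proof. by move=> f g k a; rewrite /tilted (mart_causal a). Qed.

Lemma reached_causal th L : causal (reached th L).
Proof.
move=> f g j a; apply: eq_existsb => l.
by rewrite (tilted_causal th (agree_le _ a)) // -ltnS ltn_ord.
Qed.

Lemma stopped_exp_causal th L : causal (stopped_exp th L).
Proof.
move=> f g j; elim: j => [//|j IH] a /=.
have a' := agree_le (leqnSn j) a.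
rewrite (reached_causal th L a') (IH a') (tilted_causal th a) (tilted_causal th a').
by rewrite (a j (ltnSn j)) (ntrials_causal n a').
Qed.

Lemma tiltedS th f k :
  tilted th f k.+1 - tilted th f k = th * ((f k)%:R - N f k * p) - 4 * th ^+ 2.
Proof. by rewrite /tilted /mart big_ord_recr /= -natr1; ring. Qed.

Lemma stopped_exp_ge0 th L f j : 0 <= stopped_exp th L f j.
Proof.
elim: j => [|j IH] /=; first exact: ler01.
by case: ifP => _ //; rewrite !mulr_ge0 ?expR_ge0 //; case: ifP.
Qed.

Lemma stopped_exp_unreached th L f j : feasible n f j ->
  (forall l, (l < j)%N -> tilted th f l < L) -> stopped_exp th L f j = expR (tilted th f j).
Proof.
elim: j => [|j IH] hv hL; first by rewrite /tilted /mart big_ord0 !mulr0 subr0 expR0.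
have hv' : feasible n f j by move=> l /ltnW; apply: hv.
have hj : reached th L f j = false.
  by apply/negbTE; rewrite negb_exists; apply/forallP => l; rewrite -ltNge hL.
rewrite /= hj hv ?ltnSn // mulr1 IH // => [|l /ltnW]; last exact: hL.
by rewrite -expRD addrC subrK.
Qed.

Lemma stopped_exp_reached th L f j : feasible n f j -> reached th L f j ->
  expR L <= stopped_exp th L f j.
Proof.
elim: j => [|j IH] hv hr.
  case/existsP: hr => l; rewrite (ord1 l) /= /tilted /mart big_ord0 !mulr0 subr0.
  by rewrite -expR0 ler_expR.
have hv' : feasible n f j by move=> l /ltnW; apply: hv.
case hj : (reached th L f j); first by rewrite /= hj IH.
have hlt : forall l, (l < j.+1)%N -> tilted th f l < L.
  move=> l hl; move/negbT: hj; rewrite negb_exists => /forallP/(_ (Ordinal hl)).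
  by rewrite -ltNge.
rewrite (stopped_exp_unreached hv hlt) ler_expR.
case/existsP: hr => l hl; case: (ltnP l j.+1) => [/hlt|hjl]; first by rewrite ltNge hl.
suff <- : nat_of_ord l = j.+1 by [].
by apply/eqP; rewrite eqn_leq hjl -ltnS ltn_ord.
Qed.

Hypotheses (p01 : 0 <= p <= 1) (pn2 : p * n%:R <= 2).

Lemma tilted_increment_le1 th f m : th <= 2^-1 ->
  \sum_(v < n.+1) step_pmf n p f m v * (if v%:Z <= ntrials n f m then 1 else 0)
     * expR (th * (v%:R - N f m * p) - 4 * th ^+ 2) <= 1.
Proof.
move=> ht; have [hneg|hpos] := ltP (ntrials n f m) 0.
  rewrite big1 ?ler01 // => v _.
  by rewrite ifF ?mulr0 ?mul0r //; apply/negbTE; rewrite -ltNge (lt_le_trans hneg).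
rewrite /step_pmf -[in N f m](gez0_abs hpos) -(gez0_abs hpos).
set K := absz (ntrials n f m).
have hKp : K%:R * p <= 2.
  have hK : (K < n)%N.
    by rewrite -ltz_nat gez0_abs // (le_lt_trans (ntrials_le n f m)) // gtrBl.
  have : (K%:R + 1) * p <= n%:R * p :> R.
    by case/andP: p01 => p0 _; rewrite ler_wpM2r // natr1 ler_nat.
  by case/andP: p01 => p0 _ h; have := pn2; lra.
pose g v := binom_pmf K p v * (if v%:Z <= K%:Z then 1 else 0)
            * expR (th * (v%:R - K%:R * p) - 4 * th ^+ 2).
apply: le_trans (_ : \sum_(v < K.+1) g v <= _).
  apply: sumr_ord_le_vanishing => v; last by move=> hv; rewrite /g binom_pmf_small ?mul0r.
  by rewrite /g mulr_ge0 ?expR_ge0 // mulr_ge0 ?binom_pmf_ge0 //; case: ifP.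
have -> : \sum_(v < K.+1) g v =
    (\sum_(v < K.+1) binom_pmf K p v * expR th ^+ v)
    * expR (- (th * (K%:R * p) + 4 * th ^+ 2)).
  rewrite mulr_suml; apply: eq_bigr => v _; rewrite /g lez_nat -ltnS ltn_ord mulr1 -mulrA.
  by rewrite -expRM_natl -expRD; congr (_ * expR _); ring.
rewrite binom_mgf -[leRHS](expRxMexpNx_1 (th * (K%:R * p) + 4 * th ^+ 2)).
by rewrite ler_wpM2r ?expR_ge0 ?binom_mgf_le.
Qed.

Lemma stopped_exp_step th L f m : th <= 2^-1 ->
  \sum_(v < n.+1) step_pmf n p f m v * stopped_exp th L (fupd f m v) m.+1
    <= stopped_exp th L f m.
Proof.
move=> ht; have a v : agree (fupd f m v) f m by apply: agree_fupd.
have hv v : fupd f m v m = v by rewrite /fupd eqxx.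
under eq_bigr => v _ do rewrite /= (reached_causal th L (a v)) (stopped_exp_causal th L (a v))
  tiltedS (ntrials_causal n (a v)) hv.
case: (reached th L f m) => /=.
  by rewrite -mulr_suml ler_piMl ?stopped_exp_ge0 ?binom_pmf_sum_le1.
rewrite (eq_bigr (fun v : 'I_n.+1 => stopped_exp th L f m *
    (step_pmf n p f m v * (if v%:Z <= ntrials n f m then 1 else 0)
     * expR (th * (v%:R - N f m * p) - 4 * th ^+ 2)))); last first.
  by move=> v _; move: (step_pmf n p f m v) => s; rewrite !mulrA (mulrC s).
by rewrite -mulr_sumr ler_piMr ?stopped_exp_ge0 ?tilted_increment_le1.
Qed.

Lemma reached_prob_le K th L : (0 < n)%N -> th <= 2^-1 ->
  \sum_(x : {ffun 'I_K -> 'I_n.+1} | reached th L (path_seq x) K)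
    path_weight (step_pmf n p) x <= expR (- L).
Proof.
move=> n0 ht; have q0 f j v : 0 <= step_pmf n p f j v by apply: binom_pmf_ge0.
have YL (x : {ffun 'I_K -> 'I_n.+1}) : reached th L (path_seq x) K ->
    path_weight (step_pmf n p) x != 0 -> expR L <= stopped_exp th L (path_seq x) K.
  by move=> hx hw; apply: stopped_exp_reached => //; apply: feasible_of_weight hw.
apply: le_trans (markov_paths q0 (expR_gt0 L) (fun f => stopped_exp_ge0 th L f K) YL) _.
rewrite expRN -[leRHS]mul1r ler_wpM2r ?invr_ge0 ?expR_ge0 //.
apply: le_trans (expect_supermartingale (step_pmf_causal n p) q0
  (stopped_exp_causal th L) K _) _ => //.
by move=> f j; apply: stopped_exp_step.
Qed.

End TiltedSupermartingale.

Definition deviation (R : realType) (n : nat) (a : R) (f : nat -> nat) (k : nat) : R :=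
  (walk f k)%:~R - k%:R * (a - k%:R / (2 * n%:R)).

Lemma deviation_mart (R : realType) n (a p : R) f k : (0 < n)%N -> p * n%:R = 1 + a ->
  deviation n a f k = mart n p f k - k%:R ^+ 2 * a / (2 * n%:R) - p * k%:R / 2
                      - p * \sum_(l < k) (walk f l)%:~R.
Proof.
move=> n0 pn; have nz : n%:R != 0 :> R by rewrite pnatr_eq0 -lt0n.
elim: k => [|k IH].
  by rewrite /deviation /mart /walk !big_ord0 subrr; ring.
have eM : mart n p f k = deviation n a f k + k%:R ^+ 2 * a / (2 * n%:R) + p * k%:R / 2
    + p * \sum_(l < k) (walk f l)%:~R by rewrite IH; ring.
rewrite /mart big_ord_recr /= -/(mart n p f k) eM big_ord_recr /= /deviation.
rewrite walkSr ntrialsE -[k.+1]addn1 natrD.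
have -> : p = (1 + a) / n%:R by rewrite -pn mulfK.
by field.
Qed.

Section Gronwall.
Variables (R : realType) (n K : nat) (a e eta p : R) (f : nat -> nat).
Hypotheses (n_gt0 : (0 < n)%N) (pn : p * n%:R = 1 + a) (p_ge0 : 0 <= p)
  (a_le : `|a| <= e) (e_small : e <= 100^-1) (e_eta : e <= eta / 400)
  (eta_ne : 24 <= eta * n%:R * e) (K_le : K%:R <= 3 * n%:R * e).
Local Notation S l := ((walk f l)%:~R : R).
Local Notation b := (eta * n%:R * e ^+ 2).

Let nR_gt0 : 0 < n%:R :> R. Proof. by rewrite ltr0n. Qed.
Let e_ge0 : 0 <= e. Proof. exact: le_trans (normr_ge0 a) a_le. Qed.
Let le_K l : (l <= K)%N -> l%:R <= 3 * n%:R * e.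
Proof. by move=> hl; apply: le_trans K_le; rewrite ler_nat. Qed.
Let pn_le2 : 1 + a <= 2.
Proof. by have := ler_norm a; have := a_le; have := e_small; lra. Qed.

Lemma walk_le_deviation l : (l <= K)%N ->
  `|S l| <= `|deviation n a f l| + 15 / 2 * n%:R * e ^+ 2.
Proof.
move=> /le_K hl; have e0 := e_ge0; have n0 := nR_gt0.
have -> : S l = deviation n a f l + l%:R * (a - l%:R / (2 * n%:R)) by rewrite /deviation; ring.
apply: le_trans (ler_normD _ _) _; rewrite lerD2l normrM ger0_norm //.
apply: le_trans (_ : (3 * n%:R * e) * (e + 3 * n%:R * e / (2 * n%:R)) <= _).
  have n2 : 0 < 2 * n%:R :> R by lra.
  apply: ler_pM => //; apply: le_trans (ler_normB _ _) _.
  by rewrite lerD // ger0_norm ?divr_ge0 ?(ltW n2) // ler_wpM2r // invr_ge0 (ltW n2).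
by have -> : 3 * n%:R * e * (e + 3 * n%:R * e / (2 * n%:R)) = 15 / 2 * n%:R * e ^+ 2
  by field; lra.
Qed.

Let eta_ge0 : 0 <= eta. Proof. by have := e_ge0; have := e_eta; lra. Qed.
Let b_ge0 : 0 <= b. Proof. by rewrite !mulr_ge0 ?eta_ge0 ?sqr_ge0. Qed.

Lemma sum_walk_le k : (k <= K)%N -> (forall l, (l < k)%N -> `|deviation n a f l| <= b) ->
  `|p * \sum_(l < k) S l| <= 6 * e * b + 45 * n%:R * e ^+ 3.
Proof.
move=> hk hD; have e0 := e_ge0; have n0 := nR_gt0.
set C := b + 15 / 2 * n%:R * e ^+ 2.
have C0 : 0 <= C by rewrite addr_ge0 ?b_ge0 // !mulr_ge0 ?sqr_ge0.
rewrite normrM ger0_norm //.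
apply: le_trans (_ : p * (k%:R * C) <= _).
  rewrite ler_wpM2l //; apply: le_trans (ler_norm_sum _ _ _) _.
  apply: le_trans (_ : \sum_(l < k) C <= _); last by rewrite sumr_const card_ord mulr_natl.
  apply: ler_sum => l _; apply: le_trans (walk_le_deviation _) _.
    exact: leq_trans (ltnW (ltn_ord l)) hk.
  by rewrite lerD2r hD.
apply: le_trans (_ : p * (3 * n%:R * e * C) <= _).
  by rewrite ler_wpM2l // ler_wpM2r // le_K.
have -> : p * (3 * n%:R * e * C) = (1 + a) * (3 * e * C) by rewrite -pn; ring.
apply: le_trans (_ : 2 * (3 * e * C) <= _); first by rewrite ler_wpM2r ?mulr_ge0 ?pn_le2.
by have -> : 2 * (3 * e * C) = 6 * e * b + 45 * n%:R * e ^+ 3 by rewrite /C; field.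
Qed.

Lemma deviation_budget :
  b / 2 + 9 / 2 * n%:R * e ^+ 3 + 3 * e + (6 * e * b + 45 * n%:R * e ^+ 3) <= b.
Proof.
have e0 := e_ge0; have he := e_eta; have he1 := e_small.
have B0 : 0 <= n%:R * e ^+ 2 :> R by rewrite mulr_ge0 ?sqr_ge0.
have u1 : (n%:R * e ^+ 2) * e <= (n%:R * e ^+ 2) * (eta / 400) by rewrite ler_wpM2l.
have u2 : b * e <= b * 100^-1 by rewrite ler_wpM2l ?b_ge0.
have u3 : 24 * e <= (eta * n%:R * e) * e by rewrite ler_wpM2r.
lra.
Qed.

Lemma deviation_step k : (k <= K)%N -> `|mart n p f k| < b / 2 ->
  (forall l, (l < k)%N -> `|deviation n a f l| <= b) -> `|deviation n a f k| <= b.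
Proof.
move=> hk hM hD; have e0 := e_ge0; have n0 := nR_gt0; have hkT := le_K hk.
rewrite (deviation_mart f k n_gt0 pn).
have t1 : `|k%:R ^+ 2 * a / (2 * n%:R)| <= 9 / 2 * n%:R * e ^+ 3.
  rewrite mulrAC normrM ger0_norm ?divr_ge0 ?sqr_ge0 ?mulr_ge0 //.
  apply: le_trans (_ : (3 * n%:R * e) ^+ 2 / (2 * n%:R) * e <= _).
    apply: ler_pM; rewrite ?divr_ge0 ?sqr_ge0 ?mulr_ge0 //.
    by rewrite ler_wpM2r ?invr_ge0 ?mulr_ge0 //; apply: lerXn2r; rewrite ?nnegrE ?mulr_ge0.
  by have -> : (3 * n%:R * e) ^+ 2 / (2 * n%:R) * e = 9 / 2 * n%:R * e ^+ 3 by field; lra.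
have t2 : `|p * k%:R / 2| <= 3 * e.
  rewrite ger0_norm ?divr_ge0 ?mulr_ge0 // ler_pdivrMr // -mulrA mulrC.
  apply: le_trans (_ : (3 * n%:R * e) * p <= _); first by rewrite ler_wpM2r.
  have -> : 3 * n%:R * e * p = (1 + a) * (3 * e) by rewrite -pn; ring.
  by have := pn_le2; nra.
have t3 := sum_walk_le hk hD.
have := deviation_budget.
have := ler_normB (mart n p f k - k%:R ^+ 2 * a / (2 * n%:R) - p * k%:R / 2)
                  (p * \sum_(l < k) S l).
have := ler_normB (mart n p f k - k%:R ^+ 2 * a / (2 * n%:R)) (p * k%:R / 2).
have := ler_normB (mart n p f k) (k%:R ^+ 2 * a / (2 * n%:R)).
lra.
Qed.

Lemma deviation_le_of_mart : (forall l, (l <= K)%N -> `|mart n p f l| < b / 2) ->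
  forall k, (k <= K)%N -> `|deviation n a f k| <= b.
Proof.
move=> hM; elim/ltn_ind => k IH hk; apply: deviation_step => //; first exact: hM.
by move=> l hl; apply: IH => //; apply: leq_trans (ltnW hl) hk.
Qed.

End Gronwall.

Lemma sumr_le_cover (R : numDomainType) (T : finType) (A B C : pred T) (F : T -> R) :
  (forall x, 0 <= F x) -> (forall x, A x -> B x || C x) ->
  \sum_(x | A x) F x <= \sum_(x | B x) F x + \sum_(x | C x) F x.
Proof.
move=> F0 hA; rewrite big_mkcond [\sum_(x | B x) _]big_mkcond [\sum_(x | C x) _]big_mkcond.
rewrite -big_split /=; apply: ler_sum => x _.
case hAx : (A x); last by rewrite addr_ge0 //; case: ifP.
by move: (hA x hAx); case: (B x); case: (C x); rewrite ?addr0 ?add0r ?lerDl ?F0.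
Qed.

Lemma twice_expRN_le (R : realType) (y : R) : 1 <= y -> 2 * expR (- (2 * y)) <= expR (- y).
Proof.
move=> y1; have -> : - (2 * y) = - y + - y by ring.
rewrite expRD mulrA ler_piMl ?expR_ge0 // expRN ler_pdivrMr ?expR_gt0 // mul1r.
by have := expR_ge1Dx y; lra.
Qed.

Lemma dev_event_mart (R : realType) n K (g e eta p : R) (x : {ffun 'I_K -> 'I_n.+1}) :
  (0 < n)%N -> p * n%:R = 1 + g * e -> 0 <= p -> `|g * e| <= e -> e <= 100^-1 ->
  e <= eta / 400 -> 24 <= eta * n%:R * e -> K%:R <= 3 * n%:R * e ->
  dev_event g e eta x ->
  exists2 l, (l <= K)%N & eta * n%:R * e ^+ 2 / 2 <= `|mart n p (path_seq x) l|.
Proof.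
move=> n0 pn p0 ge e1 e2 e3 hK /existsP[k hk].
have e0 : 0 < e.
  rewrite lt_def (le_trans (normr_ge0 _) ge) andbT; apply: contraTneq e3 => ->.
  by rewrite mulr0 -ltNge ltr0n.
have hD : eta * n%:R * e ^+ 2 < `|deviation n (g * e) (path_seq x) k|.
  have B0 : 0 < n%:R * e ^+ 2 :> R by rewrite mulr_gt0 ?ltr0n ?exprn_gt0.
  by move: hk; rewrite Spath_walk -1?ltnS // mulrC ltr_pdivlMr // -mulrA.
have /existsP[l hl] : [exists l : 'I_K.+1,
    ~~ (`|mart n p (path_seq x) l| < eta * n%:R * e ^+ 2 / 2)].
  rewrite -negb_forall; apply/negP => /forallP hM.
  have hM' l (hl : (l <= K)%N) := hM (Ordinal (hl : (l < K.+1)%N)).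
  have := deviation_le_of_mart n0 pn p0 ge e1 e2 e3 hK hM' (ltn_ord k).
  by rewrite leNgt hD.
by exists l; rewrite -1?ltnS // leNgt.
Qed.

Lemma mart_large_reached (R : realType) n (p c t L : R) f K l : (l <= K)%N -> 0 <= t ->
  L <= t * c - 4 * t ^+ 2 * K%:R -> c <= `|mart n p f l| ->
  reached n p t L f K || reached n p (- t) L f K.
Proof.
move=> hl t0 hL; have hlK : 4 * t ^+ 2 * l%:R <= 4 * t ^+ 2 * K%:R.
  by rewrite ler_wpM2l ?mulr_ge0 ?sqr_ge0 // ler_nat.
rewrite ler_normr => /orP[] hc; apply/orP; [left|right]; apply/existsP;
  exists (Ordinal (hl : (l < K.+1)%N)); rewrite /tilted /= ?sqrrN.
  by have := ler_wpM2l t0 hc; lra.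
by have := ler_wpM2l t0 hc; lra.
Qed.

Lemma nsteps_le (R : realType) n (e : R) : 0 <= e -> (nsteps n e)%:R <= 3 * n%:R * e.
Proof. by move=> e0; rewrite truncn_le !mulr_ge0. Qed.

Lemma dev_prob_le_tail (R : realType) n (g e eta t : R) :
  (2 <= n)%N -> -1 <= g <= 1 -> 0 < e -> e <= 100^-1 -> e <= eta / 400 ->
  24 <= eta * n%:R * e -> 0 <= t <= 2^-1 ->
  dev_prob n g e eta <=
    2 * expR (- (t * (eta * n%:R * e ^+ 2 / 2) - 4 * t ^+ 2 * (nsteps n e)%:R)).
Proof.
move=> n2 hg e0 e1 e2 h24 /andP[t0 t2].
have n0 : (0 < n)%N by apply: leq_trans n2.
have nR2 : 2 <= n%:R :> R by rewrite ler_nat.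
have ge : `|g * e| <= e by rewrite normrM (gtr0_norm e0) ler_piMl ?(ltW e0) ?ler_norml.
have hK := nsteps_le n (ltW e0).
set K := nsteps n e in hK *; set p := (1 + g * e) / n%:R.
set L := t * (eta * n%:R * e ^+ 2 / 2) - 4 * t ^+ 2 * K%:R.
have pn : p * n%:R = 1 + g * e by rewrite mulfVK // pnatr_eq0 -lt0n.
have /andP[ge1 ge2] : - e <= g * e <= e by rewrite -ler_norml.
have p01 : 0 <= p <= 1.
  by rewrite divr_ge0 ?ler_pdivrMr /= ?(lt_le_trans _ nR2) // ?mul1r; lra.
have pn2 : p * n%:R <= 2 by rewrite pn; lra.
rewrite /dev_prob -/K -/p.
under eq_bigr => x _ do rewrite path_prob_weight.
have w0 (x : {ffun 'I_K -> 'I_n.+1}) : 0 <= path_weight (step_pmf n p) x.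
  by apply: path_weight_ge0 => f j v; apply: binom_pmf_ge0.
have cover (x : {ffun 'I_K -> 'I_n.+1}) : dev_event g e eta x ->
    reached n p t L (path_seq x) K || reached n p (- t) L (path_seq x) K.
  move=> /(dev_event_mart n0 pn (proj1 (andP p01)) ge e1 e2 h24 hK) [l hl hc].
  exact: mart_large_reached hl t0 (lexx _) hc.
apply: le_trans (sumr_le_cover (B := fun x => reached n p t L (path_seq x) K)
  (C := fun x => reached n p (- t) L (path_seq x) K) w0 cover) _.
have t2' : - t <= 2^-1 by lra.
by rewrite mulr_natl mulr2n lerD // reached_prob_le.
Qed.

Lemma dev_prob_le (R : realType) n (g e eta : R) :
  (2 <= n)%N -> -1 <= g <= 1 -> 0 < e -> e <= 100^-1 -> e <= eta / 400 -> eta * e <= 1 ->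
  384 <= eta ^+ 2 * n%:R * e ^+ 3 ->
  dev_prob n g e eta <= expR (- (eta ^+ 2 / 384 * n%:R * e ^+ 3)).
Proof.
move=> n2 hg e0 e1 e2 e3 hX.
have eta0 : 0 < eta by lra.
have h24 : 24 <= eta * n%:R * e.
  have hY : eta * e ^+ 2 <= 100^-1.
    by rewrite expr2 mulrA; have := ler_wpM2r (ltW e0) e3; lra.
  have : (eta * n%:R * e) * (eta * e ^+ 2) <= (eta * n%:R * e) * 100^-1.
    by rewrite ler_wpM2l // !mulr_ge0 ?(ltW eta0) ?(ltW e0).
  lra.
(* t maximises t b/2 - 12 t^2 n e, the exponent with K replaced by 3 n e. *)
set t := eta * e / 48.
have ht : 0 <= t <= 2^-1.
  by rewrite /t divr_ge0 ?mulr_ge0 ?(ltW eta0) ?(ltW e0) //=; lra.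
apply: le_trans (dev_prob_le_tail n2 hg e0 e1 e2 h24 ht) _.
set y := eta ^+ 2 / 384 * n%:R * e ^+ 3.
have y1 : 1 <= y by rewrite /y; lra.
apply: le_trans (twice_expRN_le y1); rewrite ler_pM2l // ler_expR lerN2.
have : 4 * t ^+ 2 * (nsteps n e)%:R <= 4 * t ^+ 2 * (3 * n%:R * e).
  by rewrite ler_wpM2l ?nsteps_le ?(ltW e0) // mulr_ge0 ?sqr_ge0.
rewrite /y /t; have -> : (eta * e / 48) ^+ 2 = eta ^+ 2 * e ^+ 2 / 2304 by field.
lra.
Qed.

Lemma cube_ge_of_cbrt_ge (R : realType) (C x y z : R) : 1 <= C -> 0 <= x ->
  C <= x `^ 3^-1 * y -> y <= z -> 0 < z /\ C <= x * z ^+ 3.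
Proof.
move=> C1 x0 hC yz; have x3 := powR_ge0 x 3^-1.
have y0 : 0 < y by rewrite ltNge; apply/negP => hy; have := mulr_ge0_le0 x3 hy; lra.
have z0 : 0 < z := lt_le_trans y0 yz.
split=> //; have hz : C <= x `^ 3^-1 * z := le_trans hC (ler_wpM2l x3 yz).
have : C ^+ 3 <= (x `^ 3^-1 * z) ^+ 3 by rewrite lerXn2r ?nnegrE //; lra.
have -> : (x `^ 3^-1 * z) ^+ 3 = x * z ^+ 3.
  by rewrite exprMn -[x `^ _ ^+ 3]powR_mulrn // -powRrM mulVf ?powRr1.
have : C * 1 <= C * C ^+ 2 by rewrite ler_wpM2l ?exprn_ege1 //; lra.
by rewrite mulr1 -exprS; lra.
Qed.

Local Open Scope classical_set_scope.

Theorem proposition3p2 (R : realType) (eps_lo eps_hi : nat -> R)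
  (hle : forall n, eps_lo n <= eps_hi n)
  (hlo : (n%:R `^ (3^-1 : R)) * eps_lo n @[n --> \oo] --> +oo)
  (hhi : eps_hi n @[n --> \oo] --> 0) :
  forall eta : R, 0 < eta ->
  exists kappa : R, 0 < kappa /\
  forall gamma : R, -1 <= gamma <= 1 ->
  forall eps : nat -> R, (forall n, eps_lo n <= eps n <= eps_hi n) ->
  exists N : nat, forall n : nat, (N <= n)%N ->
    dev_prob n gamma (eps n) eta <= expR (- (kappa * n%:R * eps n ^+ 3)).
Proof.
move=> eta eta0; exists (eta ^+ 2 / 384); split; first by rewrite divr_gt0 ?exprn_gt0.
move=> gamma hg eps heps.
set c := Num.min (Num.min 100^-1 (eta / 400)) eta^-1.
have c0 : 0 < c by rewrite /c !lt_min !invr_gt0 eta0 ltr0n divr_gt0.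
have [N1 _ small] := cvgr_lt _ hhi _ c0.
have [N2 _ large] := cvgry_ge hlo (384 / eta ^+ 2 + 1).
exists (maxn 2 (maxn N1 N2)) => n; rewrite !geq_max => /and3P[n2 n1 nN2].
have /andP[elo ehi] := heps n.
have /= := le_lt_trans ehi (small n n1).
rewrite !lt_min => /andP[/andP[e1 e2] e3].
have C1 : 1 <= 384 / eta ^+ 2 + 1 by rewrite lerDr divr_ge0 // exprn_ge0 // ltW.
have [e0 hX] := cube_ge_of_cbrt_ge C1 (ler0n _ n) (large n nN2) elo.
apply: dev_prob_le => //; [exact: ltW e1 | exact: ltW e2 | |].
  by rewrite -(mulfV (lt0r_neq0 eta0)) ler_wpM2l // ltW.
have : 384 / eta ^+ 2 <= n%:R * eps n ^+ 3 by lra.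
by rewrite ler_pdivrMr ?exprn_gt0 // => h; rewrite -mulrA mulrC.
Qed.
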